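(* $\mathfrak{s}\leq\mathfrak{s}(\mathbb{R})$.
   Context: For infinite sets $U, A$, say $U$ splits $A$ if both $A\cap U$ and $A\setminus U$ are infinite. $\mathfrak{s}$ is the splitting number: the smallest cardinality of a family $\mathcal{F}$ of subsets of $\mathbb{N}$ such that every infinite subset of $\mathbb{N}$ is split by some member of $\mathcal{F}$. $\mathfrak{s}(\mathbb{R})$ is the smallest cardinality of a family $\mathcal{U}$ of open subsets of $\mathbb{R}$ (usual topology) such that every infinite $A\subseteq\mathbb{R}$ is split by some $U\in\mathcal{U}$. *)

From mathcomp Require Import all_boot all_order all_algebra.
From mathcomp Require Import all_classical all_reals all_analysis.
Import numFieldNormedType.Exports.
Local Open Scope classical_set_scope.

Definition splits {T : Type} (U A : set T) : Prop :=
  infinite_set (A `&` U) /\ infinite_set (A `\` U).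

Definition splitting_family {T : Type} (F : set (set T)) : Prop :=
  forall A : set T, infinite_set A -> exists2 U, F U & splits U A.

From mathcomp Require Import all_boot all_order all_algebra.
From mathcomp Require Import all_classical all_reals all_analysis.
Import numFieldNormedType.Exports.
Local Open Scope classical_set_scope.
Local Open Scope card_scope.

(* Pulling a splitting family on R back along the embedding n |-> n%:R gives a
   splitting family on nat that is no larger: an infinite A of naturals has an
   infinite image, and if U splits the image then the preimage of U splits A. *)

Section SplittingPreimage.
Variables (S T : Type) (f : S -> T).

Lemma infinite_set_image (A : set S) :
  injective f -> infinite_set A -> infinite_set (f @` A).
Proof.
move=> finj Ainf fAfin; apply: Ainf; apply: card_le_finite fAfin.
by have /card_eqPle[_ //] : f @` A #= A by exact: inj_card_eq (in2W finj).
Qed.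

Lemma infinite_set_image_inv (A : set S) :
  infinite_set (f @` A) -> infinite_set A.
Proof. by move=> fAinf /(finite_image f). Qed.

Lemma image_setI_preimage (A : set S) (U : set T) :
  f @` (A `&` f @^-1` U) = f @` A `&` U.
Proof.
apply/seteqP; split; first by move=> _ [a [Aa Ufa] <-]; split; [exists a|].
by move=> _ [[a Aa <-] Ufa]; exists a.
Qed.

Lemma splits_preimage (U : set T) (A : set S) :
  splits U (f @` A) -> splits (f @^-1` U) A.
Proof.
rewrite /splits !setDE preimage_setC => -[fAU fAnotU].
by split; apply: infinite_set_image_inv; rewrite image_setI_preimage.
Qed.

Lemma splitting_family_preimage (F : set (set T)) :
  injective f -> splitting_family F ->
  splitting_family [set f @^-1` U | U in F].
Proof.
move=> finj Fsplit A Ainf.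
have [U FU splitU] := Fsplit _ (infinite_set_image _ finj Ainf).
by exists (f @^-1` U); [exists U | exact: splits_preimage].
Qed.

End SplittingPreimage.

Theorem lemma2p7 (R : realType) (UU : set (set R)) :
  (forall U, UU U -> open U) -> splitting_family UU ->
  exists F : set (set nat), splitting_family F /\ (F #<= UU).
Proof.
move=> _ UUsplit.
have natr_inj : injective (fun n : nat => (n%:R : R)%R).
  by move=> m n /eqP; rewrite Num.Theory.eqr_nat => /eqP.
exists [set (fun n : nat => (n%:R : R)%R) @^-1` U | U in UU]; split.
- exact: splitting_family_preimage natr_inj UUsplit.
- exact: card_image_le.
Qed.
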